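(* For every integer $k\ge2$, the price of anarchy of the weighted atomic two-stage facility location game with $k$ facility agents, measured by the weighted participation rate (which equals the utilitarian social welfare of the facility agents, i.e. the sum of their loads), is exactly $2$. That is, for every instance $(H,U,k)$ with $k$ facility agents, every subgame perfect equilibrium $(\mathbf{s},\sigma)$ and every facility placement profile $\mathbf{s}^*$ we have $w(\mathbf{s}^* )\le 2\,w(\mathbf{s})$, and there exist instances with $k$ facility agents having a subgame perfect equilibrium $(\mathbf{s},\sigma)$ and a facility placement profile $\mathbf{s}^*$ with $w(\mathbf{s}^* )=2\,w(\mathbf{s})>0$.
   Context: Atomic two-stage facility location game. An instance is a triple $(H,U,k)$: $H=(V,E,w)$ is a finite directed graph with vertex weights $w:V\to\mathbb{Q}_{>0}$; $F$ is a set of $k$ facility agents; $U:F\to 2^V$ assigns to each facility agent $f$ a set $U(f)\subseteq V$ of feasible locations. The vertices are simultaneously the clients and the possible locations; $w(X)=\sum_{v\in X}w(v)$. A facility placement profile (FPP) is a vector $\mathbf{s}=(s_f)_{f\in F}$ with $s_f\in U(f)$ (several facilities may choose the same vertex); $S$ denotes the set of all FPPs. For a client $v$ let $N(v)=\{v\}\cup\{u:(v,u)\in E\}$ and $N_{\mathbf{s}}(v)=\{f\in F: s_f\in N(v)\}$. A client profile for $\mathbf{s}$ is $\sigma(\mathbf{s})$, assigning to each client $v$ numbers $\sigma(\mathbf{s})_{v,f}\in[0,1]$ ($f\in F$) with $\sigma(\mathbf{s})_{v,f}=0$ for $f\notin N_{\mathbf{s}}(v)$ and $\sum_{f\in N_{\mathbf{s}}(v)}\sigma(\mathbf{s})_{v,f}=1$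 whenever $N_{\mathbf{s}}(v)\neq\varnothing$. A full client profile $\sigma$ specifies a client profile $\sigma(\mathbf{s}')$ for every $\mathbf{s}'\in S$. The load of facility $f$ is $\ell_f(\mathbf{s},\sigma)=\sum_{v\in V}\sigma(\mathbf{s})_{v,f}w(v)$. The cost of client $v$ is $L_v(\mathbf{s},\sigma)=w(v)+\sum_{f\in N_{\mathbf{s}}(v)}\sigma(\mathbf{s})_{v,f}\,\ell_{-v,f}(\mathbf{s},\sigma)$ where $\ell_{-v,f}(\mathbf{s},\sigma)=\sum_{u\neq v}\sigma(\mathbf{s})_{u,f}w(u)$. $\sigma(\mathbf{s})$ is a client equilibrium if no client $v$ can strictly decrease $L_v$ by unilaterally changing her own distribution to another feasible one; $\sigma$ is a full client equilibrium if $\sigma(\mathbf{s}')$ is a client equilibrium for every $\mathbf{s}'\in S$. A pair $(\mathbf{s},\sigma)$ is a subgame perfect equilibrium (SPE) if $\sigma$ is a full client equilibrium and there is no facility $f$ and location $s'_f\in U(f)$ with $\ell_f((s'_f,\mathbf{s}_{-f}),\sigma)>\ell_f(\mathbf{s},\sigma)$. The weighted participation rate of an FPP $\mathbf{s}$ is $w(\mathbf{s})=\sum_{v:\,N_{\mathbf{s}}(v)\neq\varnothing}w(v)$. The price of anarchy is the maximum, over instances admitting an SPE with positive participation rate, of $\max_{\mathbf{s}^*\in S}w(\mathbf{s}^* )$ divided by the minimum of $w(\mathbf{s})$ over SPE $(\mathbf{s},\sigma)$ of that instance. *)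

From HB Require Import structures.
From mathcomp Require Import all_boot all_order all_algebra.
From mathcomp Require Import reals.
Set Implicit Arguments. Unset Strict Implicit. Unset Printing Implicit Defensive.
Import Order.TTheory GRing.Theory Num.Theory.
Local Open Scope ring_scope.

Section FLG.
Variables (V : finType) (E : rel V) (k : nat).

Definition inN (v u : V) : bool := (u == v) || E v u.

Definition feasible (U : 'I_k -> {set V}) (s : {ffun 'I_k -> V}) : Prop :=
  forall f, s f \in U f.

Definition inNs (s : {ffun 'I_k -> V}) (v : V) (f : 'I_k) : bool := inN v (s f).

Variable R : realType.

Definition valid_dist (s : {ffun 'I_k -> V}) (v : V) (q : 'I_k -> R) : Prop :=
  (forall f, 0 <= q f <= 1) /\
  (forall f, ~~ inNs s v f -> q f = 0) /\
  ((exists f, inNs s v f) -> \sum_(f < k) q f = 1).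

Definition client_profile (s : {ffun 'I_k -> V}) (p : V -> 'I_k -> R) : Prop :=
  forall v, valid_dist s v (p v).

Variable w : V -> rat.

Definition load (p : V -> 'I_k -> R) (f : 'I_k) : R :=
  \sum_(v : V) p v f * ratr (w v).

Definition load_minus (p : V -> 'I_k -> R) (v : V) (f : 'I_k) : R :=
  \sum_(u : V | u != v) p u f * ratr (w u).

Definition client_cost (s : {ffun 'I_k -> V}) (p : V -> 'I_k -> R) (v : V) : R :=
  ratr (w v) + \sum_(f < k | inNs s v f) p v f * load_minus p v f.

Definition dev_client (p : V -> 'I_k -> R) (v : V) (q : 'I_k -> R) : V -> 'I_k -> R :=
  fun u => if u == v then q else p u.

Definition client_eq (s : {ffun 'I_k -> V}) (p : V -> 'I_k -> R) : Prop :=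
  client_profile s p /\
  forall v q, valid_dist s v q ->
    client_cost s p v <= client_cost s (dev_client p v q) v.

Definition full_client_eq (U : 'I_k -> {set V})
  (sigma : {ffun 'I_k -> V} -> V -> 'I_k -> R) : Prop :=
  forall s', feasible U s' -> client_eq s' (sigma s').

Definition dev_fac (s : {ffun 'I_k -> V}) (f : 'I_k) (x : V) : {ffun 'I_k -> V} :=
  [ffun g => if g == f then x else s g].

Definition SPE (U : 'I_k -> {set V}) (s : {ffun 'I_k -> V})
  (sigma : {ffun 'I_k -> V} -> V -> 'I_k -> R) : Prop :=
  feasible U s /\ full_client_eq U sigma /\
  forall f x, x \in U f -> ~ (load (sigma s) f < load (sigma (dev_fac s f x)) f).

End FLG.

Definition participation (V : finType) (E : rel V) (k : nat) (w : V -> rat)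
  (s : {ffun 'I_k -> V}) : rat :=
  \sum_(v : V | [exists f : 'I_k, inN E v (s f)]) w v.

From HB Require Import structures.
From mathcomp Require Import all_boot all_order all_algebra.
From mathcomp Require Import reals.
Import Order.TTheory GRing.Theory Num.Theory.
Local Open Scope ring_scope.
Set Implicit Arguments. Unset Strict Implicit.

(* Upper bound: the loads at any client profile of s add up to w(s).  If facility f
   moved to [sstar f], every client near [sstar f] left uncovered by s would have f as
   its only option, so f would get at least their weight; at an SPE this does not
   exceed f's current load.  Summing over f, the clients covered by sstar but not by s
   weigh at most w(s), hence w(sstar) <= 2 w(s).
   Lower bound: two isolated unit-weight vertices, facility 0 free to go anywhere and
   the others pinned to [true].  With all facilities at [true] and clients served by
   facility 0 whenever it is next to them, facility 0 has load 1 wherever it stands,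
   so this is an SPE covering one vertex, while moving facility 0 to [false] covers
   both. *)

Section UpperBound.
Variables (R : realType) (V : finType) (E : rel V) (k : nat) (w : V -> rat).
Hypothesis w_ge0 : forall v, 0 <= w v.

Local Notation covered s v := [exists f : 'I_k, inN E v (s f)].

Definition uncovered_weight (s : {ffun 'I_k -> V}) (x : V) : rat :=
  \sum_(v | inN E v x && ~~ covered s v) w v.

Lemma ratr_w_ge0 v : 0 <= (ratr (w v) : R).
Proof. by rewrite ler0q. Qed.

Lemma sum_load_participation (s : {ffun 'I_k -> V}) (p : V -> 'I_k -> R) :
  client_profile E s p -> \sum_(f < k) load w p f = ratr (participation E w s).
Proof.
move=> cp; rewrite /load exchange_big rmorph_sum [RHS]big_mkcond /=.
apply: eq_bigr => v _; rewrite -mulr_suml.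
have [_ [p_out p_sum1]] := cp v.
case: ifP => [/existsP[f near_f] | /negbT/existsPn far].
- by rewrite p_sum1 ?mul1r //; exists f.
- by rewrite big1 ?mul0r // => f _; apply: p_out; rewrite /inNs far.
Qed.

Lemma load_ge_uncovered_weight (s : {ffun 'I_k -> V}) f x (p : V -> 'I_k -> R) :
  client_profile E (dev_fac s f x) p -> ratr (uncovered_weight s x) <= load w p f.
Proof.
move=> cp; rewrite rmorph_sum /load [X in X <= _]big_mkcond /=.
apply: ler_sum => v _; have [p01 [p_out p_sum1]] := cp v.
case: ifP => [/andP[near_x uncov] | _]; last first.
  by apply: mulr_ge0; [case/andP: (p01 f) | exact: ratr_w_ge0].
have near_f : inNs E (dev_fac s f x) v f by rewrite /inNs ffunE eqxx.
suff -> : p v f = 1 by rewrite mul1r.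
rewrite -(p_sum1 (ex_intro _ f near_f)) (bigD1 f) //= big1 ?addr0 // => g ne_gf.
apply: p_out; rewrite /inNs ffunE (negbTE ne_gf); apply: contra uncov => near_g.
by apply/existsP; exists g.
Qed.

Lemma participation_le_add_uncovered (s sstar : {ffun 'I_k -> V}) :
  participation E w sstar <=
  participation E w s + \sum_(f < k) uncovered_weight s (sstar f).
Proof.
rewrite /participation /uncovered_weight.
under [X in _ + X]eq_bigr do rewrite big_mkcond.
rewrite exchange_big !(big_mkcond (fun v => covered _ v)) -big_split /=.
apply: ler_sum => v _; case: (boolP (covered s v)) => [_ | uncov].
  by rewrite big1 ?addr0 => [|f _]; rewrite ?andbF //; case: ifP.
rewrite add0r; case: ifP => [/existsP[f near_f] | _]; last first.
  by apply: sumr_ge0 => f _; case: ifP.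
rewrite (bigD1 f) //= near_f lerDl.
by apply: sumr_ge0 => g _; case: ifP.
Qed.

Lemma feasible_dev_fac (U : 'I_k -> {set V}) s f x :
  feasible U s -> x \in U f -> feasible U (dev_fac s f x).
Proof. by move=> fs Ufx g; rewrite ffunE; case: eqP => [-> | _]. Qed.

Lemma SPE_load_ge_uncovered_weight (U : 'I_k -> {set V}) s
    (sigma : {ffun 'I_k -> V} -> V -> 'I_k -> R) f x :
  SPE E w U s sigma -> x \in U f ->
  ratr (uncovered_weight s x) <= load w (sigma s) f.
Proof.
move=> [fs [fce no_dev]] Ufx.
have cp := (fce _ (feasible_dev_fac fs Ufx)).1.
rewrite (le_trans (load_ge_uncovered_weight cp)) // leNgt.
exact/negP/no_dev.
Qed.

Theorem SPE_participation_le (U : 'I_k -> {set V}) s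
    (sigma : {ffun 'I_k -> V} -> V -> 'I_k -> R) sstar :
  SPE E w U s sigma -> feasible U sstar ->
  participation E w sstar <= 2 * participation E w s.
Proof.
move=> spe fsstar; have [fs [fce _]] := spe.
have uncov_le : \sum_(f < k) uncovered_weight s (sstar f) <= participation E w s.
  rewrite -(ler_rat R) rmorph_sum -(sum_load_participation (fce s fs).1).
  by apply: ler_sum => f _; apply: SPE_load_ge_uncovered_weight spe (fsstar f).
rewrite mulr_natl mulr2n (le_trans (participation_le_add_uncovered s sstar)) //.
by rewrite lerD2l.
Qed.

End UpperBound.

Definition no_edges (V : Type) : rel V := fun _ _ => false.

Section NoEdges.
Variables (R : realType) (V : finType) (k : nat) (w : V -> rat).

Lemma inN_no_edges v u : inN (@no_edges V) v u = (u == v).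
Proof. by rewrite /inN orbF. Qed.

Lemma client_profile_dev_client E (s : {ffun 'I_k -> V}) (p : V -> 'I_k -> R) v q :
  client_profile E s p -> valid_dist E s v q -> client_profile E s (dev_client p v q).
Proof. by move=> cp vq u; rewrite /dev_client; case: eqP => [-> |]. Qed.

Lemma client_cost_no_edges (s : {ffun 'I_k -> V}) (p : V -> 'I_k -> R) v :
  client_profile (@no_edges V) s p -> client_cost (@no_edges V) w s p v = ratr (w v).
Proof.
move=> cp; rewrite /client_cost big1 ?addr0 // => f; rewrite /inNs inN_no_edges => /eqP s_f.
rewrite /load_minus big1 ?mulr0 // => u ne_uv.
have [_ [p_out _]] := cp u.
by rewrite p_out ?mul0r // /inNs inN_no_edges s_f eq_sym.
Qed.

Lemma client_eq_no_edges (s : {ffun 'I_k -> V}) (p : V -> 'I_k -> R) :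
  client_profile (@no_edges V) s p -> client_eq (@no_edges V) w s p.
Proof.
move=> cp; split=> // v q vq.
by rewrite !client_cost_no_edges //; apply: client_profile_dev_client.
Qed.

End NoEdges.

Section PreferOrd0.
Variables (R : realType) (V : finType) (k : nat).

Definition prefer0_profile (s : {ffun 'I_k.+1 -> V}) (v : V) (f : 'I_k.+1) : R :=
  if s ord0 == v then (f == ord0)%:R
  else if [pick g | s g == v] is Some g then (f == g)%:R else 0.

Lemma sumr_delta (g : 'I_k.+1) : \sum_(f < k.+1) ((f == g)%:R : R) = 1.
Proof. by rewrite (bigD1 g) //= eqxx big1 ?addr0 // => f /negbTE ->. Qed.

Lemma prefer0_profile_valid s : client_profile (@no_edges V) s (prefer0_profile s).
Proof.
move=> v; rewrite /valid_dist /prefer0_profile; split; [|split].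
- have delta01 (b : bool) : 0 <= (b%:R : R) <= 1 by case: b; rewrite ?lexx ?ler01.
  by move=> f; case: ifP => _; [|case: pickP => [g _|_]]; rewrite ?delta01 ?lexx ?ler01.
- move=> f; rewrite /inNs inN_no_edges => far.
  have ne g : s g == v -> (f == g) = false.
    by move=> /eqP s_g; apply: contraNF far => /eqP ->; rewrite s_g.
  by case: ifP => [/ne -> | _] //; case: pickP => [g /ne -> |].
- move=> [f near]; case: (s ord0 == v); first exact: sumr_delta.
  case: pickP => [g _|none]; first exact: sumr_delta.
  by move: near; rewrite /inNs inN_no_edges none.
Qed.

Lemma prefer0_profile_ord0 s v : prefer0_profile s v ord0 = (s ord0 == v)%:R.
Proof.
rewrite /prefer0_profile; case: eqP => // ne; case: pickP => // g /eqP s_g.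
by case: eqP => // g0; case: ne; rewrite -s_g -g0.
Qed.

Lemma load_prefer0_ord0 (w : V -> rat) s : load w (prefer0_profile s) ord0 = ratr (w (s ord0)).
Proof.
rewrite /load (bigD1 (s ord0)) //= prefer0_profile_ord0 eqxx mul1r big1 ?addr0 //.
by move=> v ne; rewrite prefer0_profile_ord0 eq_sym (negbTE ne) mul0r.
Qed.

End PreferOrd0.

Section TightInstance.
Variables (R : realType) (k : nat).

Definition unit_weight : bool -> rat := fun _ => 1.

Definition pinned_locations (f : 'I_k.+1) : {set bool} :=
  if f == ord0 then setT else [set true].

Definition all_true : {ffun 'I_k.+1 -> bool} := [ffun=> true].

Definition first_false : {ffun 'I_k.+1 -> bool} := [ffun f => f != ord0].

Lemma feasible_pinned_locations (s : {ffun 'I_k.+1 -> bool}) :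
  (forall f, f != ord0 -> s f) -> feasible pinned_locations s.
Proof.
move=> s_true f; rewrite /pinned_locations.
by case: eqP => [_ | /eqP /s_true]; rewrite ?in_setT ?in_set1 ?eqxx // => ->.
Qed.

Lemma all_true_SPE :
  SPE (@no_edges bool) unit_weight pinned_locations all_true (@prefer0_profile R bool k).
Proof.
split; [|split].
- by apply: feasible_pinned_locations => f _; rewrite ffunE.
- by move=> s _; apply/client_eq_no_edges/prefer0_profile_valid.
move=> f x; rewrite /pinned_locations; case: eqP => [-> _ | _].
  by rewrite !load_prefer0_ord0 ltxx.
rewrite in_set1 => /eqP ->.
suff -> : dev_fac all_true f true = all_true by rewrite ltxx.
by apply/ffunP => g; rewrite !ffunE; case: ifP.
Qed.

Lemma participation_all_true : participation (@no_edges bool) unit_weight all_true = 1.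
Proof.
rewrite /participation big_mkcond big_bool /=.
case: existsP => [_ | []]; last by exists ord0; rewrite inN_no_edges ffunE.
by case: existsP => [[f] | _]; rewrite ?addr0 // inN_no_edges ffunE.
Qed.

Lemma participation_first_false :
  (0 < k)%N -> participation (@no_edges bool) unit_weight first_false = 2.
Proof.
move=> k_gt0; rewrite /participation big_mkcond big_bool /=.
case: existsP => [_ | []]; last first.
  by exists ord_max; rewrite inN_no_edges ffunE eqb_id -(inj_eq val_inj) -lt0n.
by case: existsP => [// | []]; exists ord0; rewrite inN_no_edges ffunE.
Qed.

End TightInstance.

Unset Implicit Arguments.

Theorem mainTheorem5 (R : realType) (k : nat) (hk : (2 <= k)%N) :
  (forall (V : finType) (E : rel V) (w : V -> rat) (U : 'I_k -> {set V})
          (s : {ffun 'I_k -> V}) (sigma : {ffun 'I_k -> V} -> V -> 'I_k -> R)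
          (sstar : {ffun 'I_k -> V}),
      (forall v, 0 < w v) ->
      SPE E w U s sigma ->
      feasible U sstar ->
      participation E w sstar <= 2 * participation E w s)
  /\
  (exists (V : finType) (E : rel V) (w : V -> rat) (U : 'I_k -> {set V})
          (s : {ffun 'I_k -> V}) (sigma : {ffun 'I_k -> V} -> V -> 'I_k -> R)
          (sstar : {ffun 'I_k -> V}),
      [/\ (forall v, 0 < w v), SPE E w U s sigma, feasible U sstar,
          participation E w sstar = 2 * participation E w s
        & 0 < participation E w s]).
Proof.
split=> [V E w U s sigma sstar w_gt0 spe fsstar | ].
  by apply: SPE_participation_le spe fsstar => v; apply: ltW.
case: k hk => [|k'] // k'_gt0.
exists bool, (@no_edges bool), unit_weight, (@pinned_locations k'), (all_true k'),
  (@prefer0_profile R bool k'), (first_false k').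
split=> //.
- exact: all_true_SPE.
- by apply: feasible_pinned_locations => f; rewrite ffunE.
- by rewrite participation_first_false // participation_all_true.
- by rewrite participation_all_true.
Qed.
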